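(* Let $d\ge1$, let $Z$ be a simple $d$-cycle and $D\subseteq\mathrm{Supp}(Z)$. Suppose that deleting the vertices corresponding to $D$ from $G_d(Z)$ leaves a graph with $m>1$ connected components. Then there exist $(d-1)$-cycles $C_1,\dots,C_m$ supported on $K(D)$ such that (a) any two of them have disjoint supports; and (b) any $m-1$ of them are linearly independent modulo the space $\mathcal B_{d-1}(K(D))$ of $(d-1)$-boundaries of $K(D)$, while all $m$ of them are linearly dependent modulo $\mathcal B_{d-1}(K(D))$.
   Context: Fix a field $\mathbb F$. A $d$-simplex is a $(d+1)$-element subset of $[n]$ oriented by increasing order $s_1<\dots<s_{d+1}$. A $d$-chain is a formal $\mathbb F$-combination of $d$-simplices; its support is the set of simplices with nonzero coefficient, and it is supported on a complex $K$ if its support lies in $K$. $\partial\sigma=\sum_i(-1)^{i-1}(\sigma\setminus\{s_i\})$, extended linearly. A $d$-cycle is a chain with $\partial Z=0$; it is simple if $Z\ne0$ and every $d$-cycle supported in $\mathrm{Supp}(Z)$ is a scalar multiple of $Z$. For a set $S$ of simplices, $K(S)$ is the complex of all subsets of members of $S$. $\mathcal B_{d-1}(K)=\{\partial B: B \text{ a } d\text{-chain supported on } K\}$. The facet graph $G_d(Z)$ has vertex set $\mathrm{Supp}(Z)$, two $d$-simplices adjacent iff they share a $(d-1)$-face. *)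

From HB Require Import structures.
From mathcomp Require Import all_boot all_order all_algebra.
Set Implicit Arguments. Unset Strict Implicit. Unset Printing Implicit Defensive.
Import Order.TTheory GRing.Theory.
Local Open Scope ring_scope.

(* Vertex set [n] is modelled by 'I_n; a simplex is a finite subset of 'I_n;
   a d-simplex is one with d+1 elements, oriented by increasing order. *)
Definition simplex (n : nat) := {set 'I_n}.

Notation chain F n := {ffun {set 'I_n} -> F^o}.

Definition supp (F : fieldType) (n : nat) (c : chain F n) : {set {set 'I_n}} :=
  [set s | c s != 0].

Definition is_dchain (F : fieldType) (n d : nat) (c : chain F n) : Prop :=
  forall s, c s != 0 -> #|s| = d.+1.

(* boundary: d sigma = sum_i (-1)^(i-1) (sigma \ s_i); the removed vertex v
   has 0-based position #|{x in sigma | x < v}|. Extended linearly. *)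
Definition bd (F : fieldType) (n : nat) (c : chain F n) : chain F n :=
  [ffun t : {set 'I_n} =>
     \sum_(s : {set 'I_n}) \sum_(v in s | s :\ v == t)
        (-1) ^+ #|[set x in s | (x < v)%N]| * c s].

Definition is_dcycle (F : fieldType) (n d : nat) (c : chain F n) : Prop :=
  is_dchain d c /\ bd c = 0.

Definition simple_dcycle (F : fieldType) (n d : nat) (Z : chain F n) : Prop :=
  [/\ is_dcycle d Z, Z != 0 &
      forall W : chain F n, is_dcycle d W -> supp W \subset supp Z ->
        exists a : F, W = a *: Z].

Definition cplx (n : nat) (S : {set {set 'I_n}}) : {set {set 'I_n}} :=
  [set t : {set 'I_n} | [exists s in S, t \subset s]].

Definition supported_on (F : fieldType) (n : nat) (c : chain F n)
  (K : {set {set 'I_n}}) : Prop := supp c \subset K.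

Definition in_boundaries (F : fieldType) (n d : nat) (K : {set {set 'I_n}})
  (c : chain F n) : Prop :=
  exists B : chain F n, [/\ is_dchain d B, supported_on B K & bd B = c].

(* Facet graph G_d(Z) with the vertices of D deleted: vertex set Supp(Z) \ D,
   two d-simplices adjacent iff distinct and sharing a (d-1)-face,
   i.e. their intersection has d elements. *)
Definition facet_rel_del (F : fieldType) (n d : nat) (Z : chain F n)
  (D : {set {set 'I_n}}) : rel {set 'I_n} :=
  fun s t => [&& s \in supp Z :\: D, t \in supp Z :\: D, s != t &
                 #|s :&: t| == d].

Definition ncomp_del (F : fieldType) (n d : nat) (Z : chain F n)
  (D : {set {set 'I_n}}) : nat :=
  n_comp (facet_rel_del d Z D) (mem (supp Z :\: D)).

From HB Require Import structures.
From mathcomp Require Import all_boot all_order all_algebra.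
Import GRing.Theory.
Local Open Scope ring_scope.

(* Let Z_i be the restriction of Z to the i-th component of G_d(Z) - D and
   C_i := bd Z_i.  Two facets of Supp(Z) - D sharing a (d-1)-face are adjacent,
   so a face of a facet of the i-th component that lies outside K(D) has all its
   Z-cofaces in that component; as bd Z = 0 this forces C_i to vanish there, and
   the same remark makes the supports of the C_i pairwise disjoint.  Summing,
   \sum_i Z_i = Z - Z|_D, so \sum_i C_i = bd (- Z|_D) is a boundary of K(D).
   Conversely, if \sum_i a_i C_i = bd B with B on K(D), then
   \sum_i a_i Z_i - B is a d-cycle supported in Supp(Z), hence equal to c Z by
   simplicity; B vanishes off D, so evaluating at a facet of the i-th component
   gives a_i = c for every i. *)

Set Implicit Arguments. Unset Strict Implicit. Unset Printing Implicit Defensive.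

Lemma sum_alternating_eq0 (R : zmodType) (k : nat) (g : 'I_k -> 'I_k -> R) :
  (forall v, g v v = 0) -> (forall v w : 'I_k, (v < w)%N -> g w v = - g v w) ->
  \sum_v \sum_w g v w = 0.
Proof.
move=> g_diag g_swap.
have g_split v w : g v w = (if (v < w)%N then g v w else 0) + (if (w < v)%N then g v w else 0).
  by case: ltngtP => [||/val_inj->]; rewrite ?addr0 ?add0r ?g_diag.
under eq_bigr => v _ do under eq_bigr => w _ do rewrite g_split.
under eq_bigr => v _ do rewrite big_split /=.
rewrite big_split /= [X in _ + X]exchange_big -big_split /=.
apply: big1 => v _; rewrite -big_split; apply: big1 => w _ /=.
by case: ltngtP => [vw||]; rewrite ?addr0 ?add0r // (g_swap v w vw) subrr.
Qed.

Section Boundary.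
Variables (F : fieldType) (n : nat).
Implicit Types (c : chain F n) (s t : {set 'I_n}).

Lemma bd_is_linear : linear (@bd F n).
Proof.
move=> a c1 c2; apply/ffunP => t; rewrite !ffunE /GRing.scale /= mulr_sumr -big_split.
apply: eq_bigr => s _; rewrite mulr_sumr -big_split; apply: eq_bigr => v _.
by rewrite !ffunE mulrDr mulrCA.
Qed.

HB.instance Definition _ :=
  GRing.isLinear.Build F (chain F n) (chain F n) _ (@bd F n) bd_is_linear.

Lemma bd_coface c t :
  bd c t != 0 -> exists s v, [/\ v \in s, s :\ v = t & c s != 0].
Proof.
have [/existsP [s /existsP [v /and3P [vs /eqP svt cs]]] _|no_coface] :=
  boolP [exists s : {set 'I_n}, exists v : 'I_n, [&& v \in s, s :\ v == t & c s != 0]].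
  by exists s, v.
rewrite ffunE big1 ?eqxx // => s _; apply: big1 => v /andP [vs svt].
have [->|cs] := eqVneq (c s) 0; first by rewrite mulr0.
by case/negP: no_coface; apply/existsP; exists s; apply/existsP; exists v; rewrite vs svt cs.
Qed.

Definition face_sign s (v : 'I_n) : F := (-1) ^+ #|[set x in s | (x < v)%N]|.

Lemma bdE c t :
  bd c t = \sum_(s : {set 'I_n}) (\sum_(v in s | s :\ v == t) face_sign s v) * c s.
Proof. by rewrite ffunE; apply: eq_bigr => s _; rewrite mulr_suml. Qed.

Lemma face_sign_swap s (v w : 'I_n) : v \in s -> w \in s -> (v < w)%N ->
  face_sign (s :\ w) v * face_sign s w = - (face_sign (s :\ v) w * face_sign s v).
Proof.
move=> vs ws vw; rewrite /face_sign.
have -> : [set x in s :\ w | (x < v)%N] = [set x in s | (x < v)%N].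
  apply/setP => x; rewrite !inE; case: (ltnP x v) => xv; rewrite ?andbF //.
  have xw : x != w by apply: contraTneq (ltn_trans xv vw) => ->; rewrite ltnn.
  by rewrite xw.
have -> : [set x in s | (x < w)%N] = v |: [set x in s :\ v | (x < w)%N].
  by apply/setP => x; rewrite !inE; case: (x =P v) => [->|]; rewrite ?vs ?vw.
by rewrite cardsU1 !inE eqxx /= exprS mulN1r mulrN mulrC.
Qed.

Lemma double_face_signs_cancel s t :
  \sum_(v in s) \sum_(w in s :\ v | (s :\ v) :\ w == t)
    face_sign (s :\ v) w * face_sign s v = 0.
Proof.
pose g (v w : 'I_n) := if [&& v \in s, w \in s :\ v & (s :\ v) :\ w == t]
  then face_sign (s :\ v) w * face_sign s v else 0.
transitivity (\sum_(v : 'I_n) \sum_(w : 'I_n) g v w).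
  rewrite big_mkcond; apply: eq_bigr => v _ /=.
  case: ifP => vs; last by rewrite big1 // => w _; rewrite /g vs.
  by rewrite big_mkcond; apply: eq_bigr => w _ /=; rewrite /g vs.
apply: (@sum_alternating_eq0 F n g) => [v|v w vw].
  by rewrite /g !inE eqxx /= andbF.
rewrite /g [(s :\ w) :\ v]setDDl setUC -setDDl !inE eq_sym.
have -> : (w != v) by apply: contraTneq vw => ->; rewrite ltnn.
case vs: (v \in s); case ws: (w \in s); rewrite /= ?oppr0 //.
by case: ifP => _; rewrite ?oppr0 // face_sign_swap.
Qed.

Lemma bd_bd c : bd (bd c) = 0.
Proof.
apply/ffunP => t; rewrite bdE [RHS]ffunE.
under eq_bigr => s' _ do rewrite bdE mulr_sumr.
rewrite exchange_big /=; apply: big1 => s _.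
transitivity ((\sum_(v in s) \sum_(w in s :\ v | (s :\ v) :\ w == t)
  face_sign (s :\ v) w * face_sign s v) * c s).
  rewrite mulr_suml; under eq_bigr => s' _ do rewrite mulrA mulr_sumr mulr_suml.
  rewrite (exchange_big_dep (mem s)) /=; last by move=> s' v _ /andP [].
  apply: eq_bigr => v vs; rewrite (big_pred1 (s :\ v)); last by move=> s'; rewrite /= vs eq_sym.
  by rewrite -!mulr_suml.
by rewrite double_face_signs_cancel mul0r.
Qed.

Lemma bd_dcycle d c : is_dchain d.+1 c -> is_dcycle d (bd c).
Proof.
move=> c_dchain; split; last exact: bd_bd.
move=> t /bd_coface [s [v [vs <- /c_dchain]]].
by rewrite (cardsD1 v s) vs add1n => -[].
Qed.

End Boundary.

Section Support.
Variables (F : fieldType) (n : nat).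
Implicit Types (c : chain F n) (S : {set {set 'I_n}}).

Definition restrict c S : chain F n := [ffun s => if s \in S then c s else 0].

Lemma supp_restrict c S : supp (restrict c S) = supp c :&: S.
Proof. by apply/setP => s; rewrite !inE ffunE; case: (s \in S); rewrite ?eqxx ?andbT ?andbF. Qed.

Lemma dchain_subset d c c' : is_dchain d c' -> supp c \subset supp c' -> is_dchain d c.
Proof.
move=> c'_dchain /subsetP sub s cs; apply: c'_dchain.
by have := sub s; rewrite !inE; apply.
Qed.

End Support.

Section ComponentRoots.
Variables (T : finType) (e : rel T) (a : {set T}).
Hypotheses (e_sym : connect_sym e) (a_closed : closed e (mem a)).

Definition comp_root (i : 'I_(n_comp e (mem a))) : T := enum_val i.

Lemma comp_root_inj : injective comp_root.
Proof. exact: enum_val_inj. Qed.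

Lemma comp_rootP i : fingraph.root e (comp_root i) = comp_root i /\ comp_root i \in a.
Proof. by have /andP [/eqP ? ?] := enum_valP i. Qed.

Lemma root_comp_root x : x \in a -> exists i, fingraph.root e x = comp_root i.
Proof.
move=> xa; have rx : fingraph.root e x \in predI (roots e) (mem a).
  by rewrite inE /= /roots root_root // eqxx -(closed_connect a_closed (connect_root e x)).
by exists (enum_rank_in rx (fingraph.root e x)); rewrite /comp_root enum_rankK_in.
Qed.

End ComponentRoots.

Section FacetComponents.
Variables (F : fieldType) (n d : nat) (Z : chain F n) (D : {set {set 'I_n}}).
Hypothesis Z_dchain : is_dchain d Z.

Local Notation A := (supp Z :\: D).
Local Notation e := (facet_rel_del d Z D).

Lemma facet_rel_del_sym : symmetric e.
Proof. by move=> s t; rewrite /facet_rel_del setIC [s == t]eq_sym andbCA. Qed.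

Lemma facet_rel_del_closed : closed e (mem A).
Proof. by move=> s t /and3P [sA tA _]; rewrite !inE in sA tA *; rewrite sA tA. Qed.

Lemma root_common_face s s' (v v' : 'I_n) : s \in A -> s' \in A ->
  v \in s -> v' \in s' -> s :\ v = s' :\ v' -> fingraph.root e s = fingraph.root e s'.
Proof.
move=> sA s'A vs v's face; have [->//|ne] := eqVneq s s'.
apply/(fingraph.rootP (sym_connect_sym facet_rel_del_sym))/connect1.
have /Z_dchain card_s : Z s != 0 by move: sA; rewrite !inE => /andP [].
have /Z_dchain card_s' : Z s' != 0 by move: s'A; rewrite !inE => /andP [].
rewrite /facet_rel_del sA s'A ne eqn_leq /=; apply/andP; split.
  rewrite -ltnS -card_s proper_card // properEneq subsetIl andbT.
  by apply: contra ne => /eqP/setIidPl ss'; rewrite eqEcard ss' card_s card_s' /=.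
have card_face : #|s :\ v| = d by move: card_s; rewrite (cardsD1 v s) vs add1n => -[].
by rewrite -card_face subset_leq_card // subsetI subD1set face subD1set.
Qed.

Definition component (rho : {set 'I_n}) : {set {set 'I_n}} :=
  [set s in A | fingraph.root e s == rho].

Definition comp_chain rho : chain F n := restrict Z (component rho).

Lemma bd_comp_chain_coface rho t : bd (comp_chain rho) t != 0 ->
  exists (s : {set 'I_n}) (v : 'I_n), [/\ v \in s, s :\ v = t & s \in component rho].
Proof.
case/bd_coface => s [v [vs svt]]; rewrite ffunE.
by case: ifP => [s_comp _|_]; [exists s, v | rewrite eqxx].
Qed.

Lemma bd_comp_chain_dcycle rho : (0 < d)%N -> is_dcycle d.-1 (bd (comp_chain rho)).
Proof.
move=> d_gt0; apply: bd_dcycle; rewrite prednK //.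
by apply: dchain_subset Z_dchain _; rewrite supp_restrict subsetIl.
Qed.

Lemma bd_comp_chain_disjoint rho rho' : rho != rho' ->
  [disjoint supp (bd (comp_chain rho)) & supp (bd (comp_chain rho'))].
Proof.
move=> ne; apply/pred0P => t /=; apply/negP; rewrite !inE => /andP [].
move=> /bd_comp_chain_coface [s [v [vs <- s_comp]]].
move=> /bd_comp_chain_coface [s' [v' [v's face s'_comp]]].
move: s_comp s'_comp ne; rewrite [s \in _]inE [s' \in _]inE.
move=> /andP [sA /eqP <-] /andP [s'A /eqP <-].
by rewrite (root_common_face sA s'A vs v's (esym face)) eqxx.
Qed.

Hypothesis Z_cycle : bd Z = 0.

Lemma bd_comp_chain_cplx rho : supported_on (bd (comp_chain rho)) (cplx D).
Proof.
apply/subsetP => t; rewrite inE => bd_t; apply/negPn/negP => t_notin.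
have [s [v [vs svt s_comp]]] := bd_comp_chain_coface bd_t.
have : bd (comp_chain rho - Z) t != 0.
  by rewrite linearB /= [bd Z]Z_cycle subr0.
case/bd_coface => s' [v' [v's s't]]; rewrite !ffunE.
case: ifP => [_|s'_comp]; first by rewrite subrr eqxx.
rewrite sub0r oppr_eq0 => Zs'; move/negP: s'_comp; apply.
have s'D : s' \notin D.
  apply: contra t_notin => s'D; rewrite inE; apply/existsP.
  by exists s'; rewrite s'D -s't subD1set.
have s'A : s' \in A by rewrite !inE s'D Zs'.
move: s_comp; rewrite [s \in _]inE [s' \in _]inE s'A => /andP [sA /eqP <-].
by rewrite (root_common_face s'A sA v's vs) ?s't ?svt ?eqxx.
Qed.

Hypothesis D_supp : D \subset supp Z.

Lemma dchain_cplx_supp (B : chain F n) :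
  is_dchain d B -> supported_on B (cplx D) -> supp B \subset D.
Proof.
move=> B_dchain /subsetP B_cplx; apply/subsetP => s Bs.
have /B_cplx := Bs; rewrite inE => /existsP [u /andP [uD su]].
have /Z_dchain card_u : Z u != 0 by have := subsetP D_supp u uD; rewrite inE.
move: Bs; rewrite inE => /B_dchain card_s.
suff -> : s = u by [].
by apply/eqP; rewrite eqEcard su card_u card_s /=.
Qed.

Local Notation root_of := (@comp_root _ e A).

Definition comp_boundary (i : 'I_(ncomp_del d Z D)) : chain F n :=
  bd (comp_chain (root_of i)).

Lemma comp_chainE rho s :
  comp_chain rho s = if (s \in A) && (fingraph.root e s == rho) then Z s else 0.
Proof. by rewrite ffunE inE. Qed.

Lemma comp_chain_at_root i k :
  comp_chain (root_of i) (root_of k) = if i == k then Z (root_of k) else 0.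
Proof.
have [root_k k_in] := comp_rootP k.
by rewrite comp_chainE k_in root_k (inj_eq (@comp_root_inj _ e A)) eq_sym.
Qed.

Lemma sum_comp_chain : \sum_i comp_chain (root_of i) = Z - restrict Z D.
Proof.
apply/ffunP => s; rewrite sum_ffunE !ffunE.
under eq_bigr do rewrite comp_chainE.
have [sA|sNA] := boolP (s \in A); last first.
  rewrite big1 //; move: sNA; rewrite !inE negb_and !negbK => /orP [sD|/eqP ->].
    by rewrite sD subrr.
  by rewrite if_same subrr.
have [k root_s] := root_comp_root
  (sym_connect_sym facet_rel_del_sym) facet_rel_del_closed sA.
have sD : s \notin D by move: sA; rewrite inE => /andP [].
rewrite (negPf sD) subr0 (bigD1 k) //= root_s eqxx big1 ?addr0 // => i ik.
by rewrite (inj_eq (@comp_root_inj _ e A)) eq_sym (negPf ik).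
Qed.

Lemma sum_comp_boundary_boundary :
  in_boundaries d (cplx D) (\sum_i comp_boundary i).
Proof.
exists (- restrict Z D); split.
- move=> s; rewrite !ffunE oppr_eq0.
  by case: ifP => _; [exact: Z_dchain | rewrite eqxx].
- apply/subsetP => s; rewrite !inE !ffunE oppr_eq0.
  case: ifP => [sD _|_]; last by rewrite eqxx.
  by apply/existsP; exists s; rewrite sD subxx.
rewrite /comp_boundary -linear_sum sum_comp_chain linearB /= [bd Z]Z_cycle.
by rewrite sub0r raddfN.
Qed.

Hypothesis Z_simple : forall W : chain F n,
  is_dcycle d W -> supp W \subset supp Z -> exists a : F, W = a *: Z.

Lemma comp_boundary_comb_const (a : 'I_(ncomp_del d Z D) -> F) :
  in_boundaries d (cplx D) (\sum_i a i *: comp_boundary i) -> forall i j, a i = a j.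
Proof.
case=> B [B_dchain B_cplx bd_B].
have /subsetP B_D := dchain_cplx_supp B_dchain B_cplx.
pose W := \sum_i a i *: comp_chain (root_of i) - B.
have W_supp : supp W \subset supp Z.
  apply/subsetP => s; rewrite !inE; apply: contraTneq => Zs; rewrite negbK.
  rewrite !ffunE sum_ffunE big1 => [|i _]; last by rewrite !ffunE Zs if_same scaler0.
  rewrite sub0r oppr_eq0; apply/negPn/negP => Bs.
  have sD : s \in D by apply: B_D; rewrite inE.
  by move: (subsetP D_supp s sD); rewrite inE Zs eqxx.
have W_cycle : is_dcycle d W.
  split; first exact: dchain_subset Z_dchain W_supp.
  rewrite linearB linear_sum /= bd_B; under eq_bigr do rewrite linearZ.
  exact: subrr.
have [c W_eq] := Z_simple W_cycle W_supp.
suff a_eq k : a k = c by move=> i j; rewrite !a_eq.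
have [_ k_in] := comp_rootP k.
have Zk : Z (root_of k) != 0 by move: k_in; rewrite !inE => /andP [].
have Bk : B (root_of k) = 0.
  apply/eqP/negPn/negP => Bk; have kD : root_of k \in D by apply: B_D; rewrite inE.
  by move: k_in; rewrite !inE kD.
have := congr1 (fun f : chain F n => f (root_of k)) W_eq.
rewrite !ffunE sum_ffunE Bk subr0 (bigD1 k) //= big1 => [|i ik]; last first.
  by rewrite ffunE comp_chain_at_root (negPf ik) scaler0.
by rewrite ffunE comp_chain_at_root eqxx addr0 => /(mulIf Zk).
Qed.

End FacetComponents.

Theorem lemma5p1 (F : fieldType) (n d : nat) (Z : chain F n)
  (D : {set {set 'I_n}}) (m : nat) :
  (1 <= d)%N -> simple_dcycle d Z -> D \subset supp Z ->
  ncomp_del d Z D = m -> (1 < m)%N ->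
  exists C : 'I_m -> chain F n,
    [/\ (forall i, is_dcycle d.-1 (C i) /\ supported_on (C i) (cplx D)),
        (forall i j, i != j -> [disjoint supp (C i) & supp (C j)]),
        (forall j : 'I_m, forall a : 'I_m -> F,
           in_boundaries d (cplx D) (\sum_(i | i != j) a i *: C i) ->
           forall i, i != j -> a i = 0) &
        (exists2 a : 'I_m -> F, (exists i, a i != 0) &
           in_boundaries d (cplx D) (\sum_i a i *: C i))].
Proof.
move=> d_gt0 [[Z_dchain Z_cycle] _ Z_simple] D_supp <- m_gt1.
exists (@comp_boundary _ _ d Z D); split.
- by move=> i; split; [exact: bd_comp_chain_dcycle | exact: bd_comp_chain_cplx].
- move=> i j ij; apply: (bd_comp_chain_disjoint _ Z_dchain).
  by apply: contra ij => /eqP/comp_root_inj ->.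
- move=> j a a_bd i ij; pose a' k := if k == j then 0 else a k.
  have := comp_boundary_comb_const Z_dchain D_supp Z_simple (a := a') _ i j.
  rewrite /a' eqxx (negPf ij); apply; rewrite (bigD1 j) //= eqxx scale0r add0r.
  by under eq_bigr => k kj do rewrite (negPf kj).
- exists (fun=> 1); first by exists (Ordinal (ltnW m_gt1)); exact: oner_neq0.
  under eq_bigr do rewrite scale1r.
  exact: sum_comp_boundary_boundary.
Qed.
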